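(* (i) For every pair of distortion functions $(\rho_-,\rho_+)$ there exists a decay family $\Gamma$ such that for every $R\in[0,\infty]$, every metric space with property $K(\rho_-,\rho_+,R)$ has property $k(\Gamma,R)$. (ii) For every decay family $\Gamma$ there exists a pair of distortion functions $(\rho_-,\rho_+)$ such that for every $R\in[0,\infty]$, every metric space with property $k(\Gamma,R)$ has property $K(\rho_-,\rho_+,R)$.
   Context: A distortion function is a non-decreasing proper function $[0,\infty)\to[0,\infty)$. A decay function is a bounded non-increasing function $\gamma:[0,\infty)\to[0,\infty)$ tending to zero at infinity; a decay family is a collection $\Gamma=\{\gamma_{r,\delta}\}$ of decay functions indexed by $(r,\delta)\in[0,\infty)\times(0,1]$. A kernel $K:Y\times Y\to\mathbb{R}_+$ is negative type if $\sum_{i,j}z_i\overline{z_j}K(y_i,y_j)\le0$ for all finite $\{y_1,\dots,y_m\}\subseteq Y$ and $z_i\in\mathbb{C}$ with $\sum z_i=0$; a kernel $k$ is positive type if $\sum_{i,j}z_i\overline{z_j}k(y_i,y_j)\ge0$ for all finite $\{y_i\}\subseteq Y$ and all $z_i\in\mathbb{C}$. A metric space $Y$ has property $K(\rho_-,\rho_+,R)$ ($R\in[0,\infty]$) if there is a kernel $K:Y\times Y\to\mathbb{R}_+$ with $K(x,x)=0$, $K(x,y)=K(y,x)$, $\rho_-(d(x,y))\le K(x,y)\le\rho_+(d(x,y))$, and whose restriction to $E\times E$ is negative type for each $E\subseteq Y$ of diameter at most $R$. $Y$ has property $k(\Gamma,R)$ if for every $(r,\delta)\in[0,\infty)\times(0,1]$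 there is a kernel $k:Y\times Y\to[0,1]$ with $k(x,x)=1$, $k(x,y)=k(y,x)$, $1-k(x,y)<\delta$ whenever $d(x,y)\le r$, $k(x,y)\le\gamma_{r,\delta}(d(x,y))$ for all $x,y$, and whose restriction to $E\times E$ is positive type for each $E\subseteq Y$ of diameter at most $R$. *)

From HB Require Import structures.
From mathcomp Require Import all_boot all_order all_algebra.
From mathcomp Require Import all_classical all_reals.
From mathcomp Require Import ereal Rstruct.
From mathcomp Require Import complex.
From Stdlib Require Import Reals.
Set Implicit Arguments. Unset Strict Implicit. Unset Printing Implicit Defensive.
Import Order.TTheory GRing.Theory Num.Theory.
Local Open Scope ring_scope.
Local Open Scope complex_scope.

Notation RR := Rdefinitions.R.
Notation CC := (RR[i]).

(** Functions [0,oo) -> [0,oo) are represented by functions RR -> RR,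
    of which only the values on [0,oo) matter. *)

Definition distortion (rho : RR -> RR) : Prop :=
  (forall t, 0 <= t -> 0 <= rho t) /\
  (forall s t, 0 <= s -> s <= t -> rho s <= rho t) /\
  (forall M : RR, exists N : RR, forall t, 0 <= t -> rho t <= M -> t <= N).

Definition decay (g : RR -> RR) : Prop :=
  (forall t, 0 <= t -> 0 <= g t) /\
  (exists B : RR, forall t, 0 <= t -> g t <= B) /\
  (forall s t, 0 <= s -> s <= t -> g t <= g s) /\
  (forall eps : RR, 0 < eps -> exists T : RR, forall t, T <= t -> g t < eps).

Definition decay_family (G : RR -> RR -> RR -> RR) : Prop :=
  forall r delta, 0 <= r -> 0 < delta -> delta <= 1 -> decay (G r delta).

Record metricSpace := MetricSpace {
  mcarrier :> Type;
  mdist : mcarrier -> mcarrier -> RR;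
  mdist_ge0 : forall x y, 0 <= mdist x y;
  mdist_eq0 : forall x y, mdist x y = 0 <-> x = y;
  mdist_sym : forall x y, mdist x y = mdist y x;
  mdist_tri : forall x y z, mdist x z <= mdist x y + mdist y z }.

Definition diam_le (Y : metricSpace) (E : set Y) (Rb : \bar RR) : Prop :=
  forall x y, E x -> E y -> ((mdist x y)%:E <= Rb)%E.

Definition neg_type_on (Y : Type) (K : Y -> Y -> RR) (E : set Y) : Prop :=
  forall (m : nat) (y : 'I_m -> Y) (z : 'I_m -> CC),
    (forall i, E (y i)) -> \sum_(i < m) z i = 0 ->
    \sum_(i < m) \sum_(j < m) z i * (z j)^* * (K (y i) (y j))%:C <= 0.

Definition pos_type_on (Y : Type) (k : Y -> Y -> RR) (E : set Y) : Prop :=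
  forall (m : nat) (y : 'I_m -> Y) (z : 'I_m -> CC),
    (forall i, E (y i)) ->
    0 <= \sum_(i < m) \sum_(j < m) z i * (z j)^* * (k (y i) (y j))%:C.

Definition propK (Y : metricSpace) (rhom rhop : RR -> RR) (Rb : \bar RR) : Prop :=
  exists K : Y -> Y -> RR,
    (forall x y, 0 <= K x y) /\
    (forall x, K x x = 0) /\
    (forall x y, K x y = K y x) /\
    (forall x y, rhom (mdist x y) <= K x y /\ K x y <= rhop (mdist x y)) /\
    (forall E : set Y, diam_le E Rb -> neg_type_on K E).

Definition propk (Y : metricSpace) (G : RR -> RR -> RR -> RR) (Rb : \bar RR) : Prop :=
  forall r delta, 0 <= r -> 0 < delta -> delta <= 1 ->
  exists k : Y -> Y -> RR,
    (forall x y, 0 <= k x y /\ k x y <= 1) /\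
    (forall x, k x x = 1) /\
    (forall x y, k x y = k y x) /\
    (forall x y, mdist x y <= r -> 1 - k x y < delta) /\
    (forall x y, k x y <= G r delta (mdist x y)) /\
    (forall E : set Y, diam_le E Rb -> pos_type_on k E).

(* (i) is Schoenberg's theorem.  If [K] is of negative type and vanishes on
   the diagonal, then [exp (- t K i j) = u i * u j * exp (t G i j)], where the
   matrix [G] of Gromov products at a base point is positive semidefinite; by
   the Schur product theorem [exp] preserves positive semidefiniteness, so
   [exp (- t K)] is of positive type.  A rate [t] small compared to [rho_+ r]
   gives [1 - k < delta] on [r]-balls, and [rho_-] gives the decay.
   (ii) Take [k_n] for [r = n] and [delta = 2^-n], and [K = \sum_n (1 - k_n)],
   a limit of kernels of negative type.  The terms with [n >= d(x, y)] add up
   to at most [2], so [K <= d + 3]; the terms with [n < d] give the lower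
   distortion through [k_n <= gamma_n (d)].  Complex coefficients reduce to
   the real quadratic forms of the real and imaginary parts. *)

From Pilot Require Import Defs.
From mathcomp Require Import all_boot all_order all_algebra.
From mathcomp Require Import all_classical all_reals all_analysis.
From mathcomp Require Import Rstruct Rstruct_topology complex ring lra.
Import Order.TTheory GRing.Theory Num.Theory.
Import numFieldNormedType.Exports.
Local Open Scope ring_scope.
Local Open Scope classical_set_scope.
Set Implicit Arguments. Unset Strict Implicit. Unset Printing Implicit Defensive.

Lemma cvg_ge0 (R : realFieldType) (f : nat -> R) (l : R) :
  f N @[N --> \oo] --> l -> (forall n, 0 <= f n) -> 0 <= l.
Proof.
move=> fl f0; rewrite -(cvg_lim _ fl) //.
by apply: limr_ge; [exact: cvgP fl | exact: nearW].
Qed.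

Lemma cvg_le0 (R : realFieldType) (f : nat -> R) (l : R) :
  f N @[N --> \oo] --> l -> (forall n, f n <= 0) -> l <= 0.
Proof.
move=> fl f0; rewrite -(cvg_lim _ fl) //.
by apply: limr_le; [exact: cvgP fl | exact: nearW].
Qed.

Section QuadraticForm.
Variables (R : realFieldType) (m : nat).
Implicit Types (M A B : 'I_m -> 'I_m -> R) (x y z u : 'I_m -> R).

Definition bform M x y := \sum_i \sum_j x i * y j * M i j.
Definition qform M x := bform M x x.
Definition psd M := forall x, 0 <= qform M x.
Definition sym M := forall i j, M i j = M j i.
Definition unitv (p : 'I_m) : 'I_m -> R := fun i => (i == p)%:R.

Lemma bformDl M x y z : bform M (x \+ y) z = bform M x z + bform M y z.
Proof.
rewrite /bform -big_split /=; apply: eq_bigr => i _.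
by rewrite -big_split /=; apply: eq_bigr => j _; ring.
Qed.

Lemma bformDr M x y z : bform M z (x \+ y) = bform M z x + bform M z y.
Proof.
rewrite /bform -big_split /=; apply: eq_bigr => i _.
by rewrite -big_split /=; apply: eq_bigr => j _; ring.
Qed.

Lemma bformZl M x z c : bform M (fun i => c * x i) z = c * bform M x z.
Proof.
rewrite /bform mulr_sumr; apply: eq_bigr => i _.
by rewrite mulr_sumr; apply: eq_bigr => j _; ring.
Qed.

Lemma bformZr M x z c : bform M z (fun i => c * x i) = c * bform M z x.
Proof.
rewrite /bform mulr_sumr; apply: eq_bigr => i _.
by rewrite mulr_sumr; apply: eq_bigr => j _; ring.
Qed.

Lemma bformC M x y : sym M -> bform M x y = bform M y x.
Proof.
move=> sM; rewrite /bform exchange_big /=; apply: eq_bigr => i _.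
by apply: eq_bigr => j _; rewrite sM; ring.
Qed.

Lemma sum_unitv (p : 'I_m) (F : 'I_m -> R) : \sum_j unitv p j * F j = F p.
Proof.
rewrite (bigD1 p) //= /unitv eqxx mul1r big1 ?addr0 // => j /negbTE ->.
by rewrite mul0r.
Qed.

Lemma bform_unitvr M x p : bform M x (unitv p) = \sum_i x i * M i p.
Proof.
apply: eq_bigr => i _.
under eq_bigr do rewrite (mulrC (x i)) -mulrA.
by rewrite (sum_unitv p (fun j => x i * M i j)).
Qed.

Lemma qform_unitv M (p : 'I_m) : qform M (unitv p) = M p p.
Proof. by rewrite /qform bform_unitvr sum_unitv. Qed.

Lemma qform_shift M x p t : sym M ->
  qform M (fun i => x i + t * unitv p i) =
  qform M x + 2 * t * (\sum_i x i * M i p) + t ^+ 2 * M p p.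
Proof.
move=> sM; rewrite /qform bformDl !bformDr !bformZl !bformZr.
by rewrite (bformC (unitv p) x sM) !bform_unitvr sum_unitv; ring.
Qed.

Lemma qform0 M : qform M (fun=> 0) = 0.
Proof. by rewrite /qform /bform big1 // => i _; rewrite big1 // => j _; rewrite !mul0r. Qed.

Lemma qform_sum I (r : seq I) (F : I -> 'I_m -> 'I_m -> R) x :
  qform (fun i j => \sum_(k <- r) F k i j) x = \sum_(k <- r) qform (F k) x.
Proof.
rewrite /qform /bform.
under eq_bigr do under eq_bigr do rewrite mulr_sumr.
by under eq_bigr do rewrite exchange_big; rewrite exchange_big.
Qed.

Lemma qformMr M c x : qform (fun i j => M i j * c) x = qform M x * c.
Proof.
rewrite /qform /bform mulr_suml; apply: eq_bigr => i _.
by rewrite mulr_suml; apply: eq_bigr => j _; rewrite mulrA.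
Qed.

Lemma qform1 x : qform (fun _ _ : 'I_m => 1) x = (\sum_i x i) ^+ 2.
Proof.
rewrite /qform /bform expr2 mulr_suml; apply: eq_bigr => i _.
by rewrite mulr_sumr; apply: eq_bigr => j _; rewrite mulr1.
Qed.

Lemma qform_cvg (Ms : nat -> 'I_m -> 'I_m -> R) M x :
  (forall i j, Ms N i j @[N --> \oo] --> M i j) ->
  qform (Ms N) x @[N --> \oo] --> qform M x.
Proof.
move=> H; apply: cvg_big => // [|i _]; first exact: add_continuous.
apply: cvg_big => // [|j _]; first exact: add_continuous.
exact: cvgMl_tmp.
Qed.

Lemma psd_col0 M (p : 'I_m) : psd M -> sym M -> M p p = 0 ->
  forall i, M i p = 0.
Proof.
move=> pM sM M0 i; apply/eqP/negP => Mip_neq0.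
have := pM (fun k => unitv i k + (- (M i i + 1) / (2 * M i p)) * unitv p k).
rewrite qform_shift // M0 qform_unitv sum_unitv expr2 !mulr0 addr0.
have -> : 2 * (- (M i i + 1) / (2 * M i p)) * M i p = - (M i i + 1).
  by field; apply/negP.
lra.
Qed.

Lemma psd_schur_complement B (p : 'I_m) : psd B -> sym B -> 0 < B p p ->
  psd (fun i j => B i j - B i p * B j p / B p p).
Proof.
move=> pB sB Bpp_gt0 x.
set b := B p p; set s := \sum_i x i * B i p.
have -> : qform (fun i j => B i j - B i p * B j p / b) x = qform B x - s * s / b.
  rewrite /qform /bform.
  transitivity (\sum_i \sum_j (x i * x j * B i j - (x i * B i p) * (x j * B j p) / b)).
    by apply: eq_bigr => i _; apply: eq_bigr => j _; ring.
  under eq_bigr do rewrite sumrB.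
  rewrite sumrB /s mulr_suml mulr_suml; congr (_ - _); apply: eq_bigr => i _.
  by rewrite mulr_sumr mulr_suml.
have := pB (fun i => x i + (- s / b) * unitv p i).
rewrite qform_shift // -/b -/s.
have b_neq0 : b != 0 by rewrite gt_eqF.
by have -> : qform B x + 2 * (- s / b) * s + (- s / b) ^+ 2 * b = qform B x - s * s / b
  by field.
Qed.

(* Induction on the number [n] of rows of [B] that may be nonzero: the Schur
   complement removes one row, and the removed rank-one part contributes the
   nonnegative term [qform A (x * B _ p) / B p p]. *)
Lemma psd_schur_product_rows n : forall A B,
  psd A -> psd B -> sym B -> (forall i j : 'I_m, (n <= i)%N -> B i j = 0) ->
  psd (fun i j => A i j * B i j).
Proof.
elim: n => [|n IH] A B pA pB sB B0.
  move=> x; rewrite /qform /bform big1 // => i _; rewrite big1 // => j _.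
  by rewrite B0 // !mulr0.
have [nm | mn] := ltnP n m; last first.
  apply: IH => // i j ni; exfalso.
  by move: (ltn_ord i); rewrite ltnNge (leq_trans mn ni).
pose p : 'I_m := Ordinal nm.
have ip (i : 'I_m) : (n <= i)%N -> (i <= n)%N -> i = p.
  by move=> ni i_n; apply: val_inj => /=; apply/eqP; rewrite eqn_leq i_n ni.
have [Bpp0 | Bpp_neq0] := eqVneq (B p p) 0.
  apply: IH => // i j ni; have [lt | le] := ltnP n i; first exact: B0.
  by rewrite (ip i ni le) sB (psd_col0 pB sB Bpp0).
have Bpp_gt0 : 0 < B p p by rewrite lt_def Bpp_neq0 -qform_unitv pB.
pose B' i j := B i j - B i p * B j p / B p p.
have pB' : psd B' by exact: psd_schur_complement.
have sB' : sym B' by move=> i j; rewrite /B' sB [B i p * _]mulrC.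
have B'0 (i j : 'I_m) : (n <= i)%N -> B' i j = 0.
  move=> ni; rewrite /B'; have [lt | le] := ltnP n i.
    by rewrite (B0 i j lt) (B0 i p lt) !mul0r subr0.
  by rewrite (ip i ni le) (sB j p) mulrAC divff // mul1r subrr.
move=> x.
have -> : qform (fun i j => A i j * B i j) x =
  qform (fun i j => A i j * B' i j) x + qform A (fun i => x i * B i p) / B p p.
  rewrite /qform /bform mulr_suml -big_split; apply: eq_bigr => i _ /=.
  rewrite mulr_suml -big_split; apply: eq_bigr => j _ /=.
  by rewrite /B'; field.
by rewrite addr_ge0 ?divr_ge0 ?(ltW Bpp_gt0) //; apply: IH.
Qed.

Lemma psd_schur_product A B : psd A -> psd B -> sym B ->
  psd (fun i j => A i j * B i j).
Proof.
by move=> pA pB sB; apply: (@psd_schur_product_rows m) => // i j; rewrite leqNgt ltn_ord.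
Qed.

Lemma psd_expr A k : psd A -> sym A -> psd (fun i j => A i j ^+ k).
Proof.
move=> pA sA; elim: k => [|k IH].
  rewrite (_ : (fun i j => A i j ^+ 0) = fun _ _ => 1) => [x|].
    by rewrite qform1 sqr_ge0.
  by apply/funext => i; apply/funext => j; rewrite expr0.
rewrite (_ : (fun i j => A i j ^+ k.+1) = fun i j => A i j * A i j ^+ k).
  by apply: psd_schur_product => // i j; rewrite sA.
by apply/funext => i; apply/funext => j; rewrite exprS.
Qed.

Lemma psd_scale A u : psd A -> psd (fun i j => u i * u j * A i j).
Proof.
move=> pA x.
have -> : qform (fun i j => u i * u j * A i j) x = qform A (fun i => x i * u i).
  by apply: eq_bigr => i _; apply: eq_bigr => j _; ring.
exact: pA.
Qed.

Definition cond_neg M := forall a, \sum_i a i = 0 -> qform M a <= 0.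

Lemma cond_neg_sum I (r : seq I) (F : I -> 'I_m -> 'I_m -> R) :
  (forall k, cond_neg (F k)) -> cond_neg (fun i j => \sum_(k <- r) F k i j).
Proof. by move=> nF a a0; rewrite qform_sum sumr_le0 // => k _; apply: nF. Qed.

Lemma cond_neg_cvg (Ms : nat -> 'I_m -> 'I_m -> R) M :
  (forall N, cond_neg (Ms N)) -> (forall i j, Ms N i j @[N --> \oo] --> M i j) ->
  cond_neg M.
Proof.
move=> nMs MsM a a0; have := qform_cvg (x := a) MsM.
move/cvg_le0; apply => N; exact: nMs.
Qed.

Lemma cond_neg_one_sub A : psd A -> cond_neg (fun i j => 1 - A i j).
Proof.
move=> pA a a0.
have -> : qform (fun i j => 1 - A i j) a = qform (fun _ _ => 1) a - qform A a.
  rewrite /qform /bform -sumrB; apply: eq_bigr => i _; rewrite -sumrB.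
  by apply: eq_bigr => j _; ring.
by rewrite qform1 a0 expr0n /= subr_le0 pA.
Qed.

(* Test [M] against [x - (\sum_i x i) e_p], whose coordinates sum to zero. *)
Lemma cond_neg_gromov_psd M (p : 'I_m) : sym M -> M p p = 0 -> cond_neg M ->
  psd (fun i j => M i p + M j p - M i j).
Proof.
move=> sM Mpp nM x.
set S := \sum_i x i; set c := \sum_i x i * M i p.
have : qform M (fun i => x i + (- S) * unitv p i) <= 0.
  apply: nM; rewrite big_split /= -mulr_sumr.
  have -> : \sum_i unitv p i = 1 :> R.
    by rewrite -(sum_unitv p (fun=> 1)); apply: eq_bigr => i _; rewrite mulr1.
  by rewrite mulr1 subrr.
rewrite qform_shift // Mpp mulr0 addr0 -/c.
have -> : qform (fun i j => M i p + M j p - M i j) x = 2 * (S * c) - qform M x.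
  rewrite /qform /bform.
  transitivity (\sum_i \sum_j (x i * M i p * x j + x i * (x j * M j p)
                                 - x i * x j * M i j)).
    by apply: eq_bigr => i _; apply: eq_bigr => j _; ring.
  under eq_bigr do rewrite sumrB big_split /= -mulr_sumr -mulr_sumr.
  by rewrite sumrB big_split /= -!mulr_suml -/S -/c; ring.
lra.
Qed.

End QuadraticForm.

Section ExponentialKernel.
Variables (R : realType) (m : nat).
Implicit Types (M A : 'I_m -> 'I_m -> R).

Lemma psd_expR A : psd A -> sym A -> psd (fun i j => expR (A i j)).
Proof.
move=> pA sA x.
apply: (@cvg_ge0 _ (fun N => qform (fun i j => series (exp_coeff (A i j)) N) x)).
  by apply: qform_cvg => i j; exact: is_cvg_series_exp_coeff.
move=> N; rewrite /series /= qform_sum; apply: sumr_ge0 => k _.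
by rewrite /exp_coeff /= qformMr mulr_ge0 ?invr_ge0 ?psd_expr.
Qed.

(* Schoenberg: [exp (- t M i j) = u i * u j * exp (t * G i j)] with [G] the
   Gromov-product matrix based at any point [p] and [u i = exp (- t M i p)]. *)
Lemma cond_neg_expR_psd M t : sym M -> (forall i, M i i = 0) -> cond_neg M ->
  0 <= t -> psd (fun i j => expR (- t * M i j)).
Proof.
move=> sM M0 nM t0.
have [p _ | I0] := pickP (@predT 'I_m); last first.
  by move=> x; rewrite /qform /bform big1 // => i; have := I0 i.
pose G i j := M i p + M j p - M i j.
pose u i := expR (- t * M i p).
rewrite (_ : (fun i j => _) = fun i j => u i * u j * expR (G i j * t)).
  apply: psd_scale; apply: (psd_expR (A := fun i j => G i j * t)).
    by move=> x; rewrite qformMr mulr_ge0 ?cond_neg_gromov_psd.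
  by move=> i j; rewrite /G (sM i j); ring.
apply/funext => i; apply/funext => j.
by rewrite /u -!exp.expRD /G; congr expR; ring.
Qed.

End ExponentialKernel.

Local Open Scope complex_scope.

Lemma hermitian_form_real m (M : 'I_m -> 'I_m -> RR) (z : 'I_m -> CC) : sym M ->
  \sum_i \sum_j z i * (z j)^* * (M i j)%:C =
  (qform M (fun i => complex.Re (z i)) + qform M (fun i => complex.Im (z i)))%:C.
Proof.
move=> sM; apply/eqP; rewrite eq_complex /=; apply/andP; split; apply/eqP.
  rewrite raddf_sum /qform /bform -big_split; apply: eq_bigr => i _ /=.
  rewrite raddf_sum -big_split; apply: eq_bigr => j _ /=.
  by case: (z i) => a b; case: (z j) => c d /=; ring.
rewrite raddf_sum.
transitivity (bform M (fun i => complex.Im (z i)) (fun i => complex.Re (z i)) -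
              bform M (fun i => complex.Re (z i)) (fun i => complex.Im (z i))).
  rewrite /bform -sumrB; apply: eq_bigr => i _ /=.
  rewrite raddf_sum -sumrB; apply: eq_bigr => j _ /=.
  by case: (z i) => a b; case: (z j) => c d /=; ring.
by rewrite (bformC _ _ sM) subrr.
Qed.

Section KernelsOfType.
Variables (Y : Type) (E : set Y).

Lemma pos_type_onP (k : Y -> Y -> RR) : (forall x y, k x y = k y x) ->
  pos_type_on k E <->
  forall m (y : 'I_m -> Y), (forall i, E (y i)) -> psd (fun i j => k (y i) (y j)).
Proof.
move=> sk; split=> [pk m y Ey x | pk m y z Ey].
  have := pk m y (fun i => (x i)%:C) Ey.
  by rewrite hermitian_form_real ?ler0c /= ?qform0 ?addr0 // => i j; apply: sk.
rewrite hermitian_form_real; last by move=> i j; apply: sk.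
by rewrite ler0c addr_ge0 ?pk.
Qed.

Lemma neg_type_onP (K : Y -> Y -> RR) : (forall x y, K x y = K y x) ->
  neg_type_on K E <->
  forall m (y : 'I_m -> Y), (forall i, E (y i)) -> cond_neg (fun i j => K (y i) (y j)).
Proof.
move=> sK; split=> [nK m y Ey a a0 | nK m y z Ey z0].
  have a0C : \sum_i (a i)%:C = 0.
    by apply/eqP; rewrite eq_complex !raddf_sum /= a0 big1 // eqxx.
  have := nK m y (fun i => (a i)%:C) Ey a0C.
  rewrite hermitian_form_real /= ?qform0 ?addr0; last by move=> i j; apply: sK.
  by rewrite lecE /= => /andP[].
rewrite hermitian_form_real; last by move=> i j; apply: sK.
have Re0 : \sum_i complex.Re (z i) = 0 by rewrite -raddf_sum z0.
have Im0 : \sum_i complex.Im (z i) = 0 by rewrite -raddf_sum z0.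
have := nK m y Ey _ Re0; have := nK m y Ey _ Im0.
rewrite lecE /= eqxx /=; lra.
Qed.

Lemma neg_type_expR_pos_type (K : Y -> Y -> RR) t :
  (forall x y, K x y = K y x) -> (forall x, K x x = 0) -> neg_type_on K E ->
  0 <= t -> pos_type_on (fun x y => expR (- t * K x y)) E.
Proof.
move=> sK K0 /(neg_type_onP sK) nK t0.
have sk x y : expR (- t * K x y) = expR (- t * K y x) by rewrite sK.
apply/(pos_type_onP sk) => m y Ey.
apply: (cond_neg_expR_psd _ _ (nK m y Ey) t0) => [i j | i]; [exact: sK | exact: K0].
Qed.

Lemma neg_type_cvg_sum_one_sub (k : nat -> Y -> Y -> RR) (K : Y -> Y -> RR) :
  (forall n x y, k n x y = k n y x) -> (forall n, pos_type_on (k n) E) ->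
  (forall x y, K x y = K y x) ->
  (forall x y, \sum_(0 <= n < N) (1 - k n x y) @[N --> \oo] --> K x y) ->
  neg_type_on K E.
Proof.
move=> sk pk sK kK; apply/neg_type_onP => // m y Ey.
apply: (cond_neg_cvg (Ms := fun N i j => \sum_(0 <= n < N) (1 - k n (y i) (y j)))).
  move=> N; apply: cond_neg_sum => n; apply: cond_neg_one_sub.
  exact: (pos_type_onP (sk n)).1 (pk n) m y Ey.
by move=> i j; apply: kK.
Qed.

End KernelsOfType.

Lemma decay_expR_distortion (rho : RR -> RR) t : distortion rho -> 0 < t ->
  decay (fun s => expR (- t * rho s)).
Proof.
move=> [rho0 [rho_mono rho_proper]] t0.
split; first by move=> s _; exact: expR_ge0.
split; first by exists 1 => s s0; rewrite expR_le1; have := rho0 s s0; nra.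
split; first by move=> s s' s0 ss'; rewrite ler_expR; have := rho_mono s s' s0 ss'; nra.
move=> eps eps0; have [N HN] := rho_proper ((eps * t)^-1).
exists (Num.max 0 N + 1) => s hs.
have [N0 NN] : 0 <= Num.max 0 N /\ N <= Num.max 0 N by rewrite !le_max !lexx orbT.
have s0 : 0 <= s by lra.
have rho_big : (eps * t)^-1 < rho s by rewrite ltNge; apply/negP => /(HN s s0); lra.
have ty_gt : eps^-1 < t * rho s.
  have -> : eps^-1 = t * (eps * t)^-1 by field; rewrite !gt_eqF.
  by rewrite ltr_pM2l.
have : eps^-1 < expR (t * rho s) by have := expR_ge1Dx (t * rho s); lra.
by rewrite mulNr expRN invf_plt ?posrE ?expR_gt0.
Qed.

Section DecayFromDistortion.
Variables rhom rhop : RR -> RR.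
Hypothesis rhop_dist : distortion rhop.

(* With [t = delta / (2 (1 + rhop r))], [1 - exp (- t K) <= t K <= t rhop r < delta]
   on the [r]-ball. *)
Definition exp_decay r delta s := expR (- (delta / (2 * (1 + rhop r))) * rhom s).

Lemma exp_scale_gt0 r delta : 0 <= r -> 0 < delta -> 0 < delta / (2 * (1 + rhop r)).
Proof. by move=> r0 d0; rewrite divr_gt0 //; have := rhop_dist.1 r r0; lra. Qed.

Lemma decay_family_exp_decay : distortion rhom -> decay_family exp_decay.
Proof. by move=> rhom_dist r delta r0 d0 _; apply: decay_expR_distortion (exp_scale_gt0 r0 d0). Qed.

Lemma propK_propk (Y : metricSpace) Rb : propK Y rhom rhop Rb -> propk Y exp_decay Rb.
Proof.
move=> [K [K0 [Kxx [Ksym [Kbd Kneg]]]]] r delta r0 d0 _.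
have [rhop0 [rhop_mono _]] := rhop_dist.
set t := delta / (2 * (1 + rhop r)); have t0 : 0 < t := exp_scale_gt0 r0 d0.
exists (fun x y => expR (- t * K x y)).
split; first by move=> x y; rewrite expR_ge0 expR_le1; have := K0 x y; nra.
split; first by move=> x; rewrite Kxx mulr0 exp.expR0.
split; first by move=> x y; rewrite Ksym.
split.
  move=> x y dxy; rewrite mulNr; have := expR_ge1Dx (- (t * K x y)).
  have tK : t * K x y <= t * rhop r.
    rewrite ler_pM2l //; apply: le_trans (Kbd x y).2 _.
    exact: rhop_mono (Defs.mdist_ge0 x y) dxy.
  have : t * (1 + rhop r) = delta / 2.
    by rewrite /t; field; rewrite gt_eqF //; have := rhop0 r r0; lra.
  lra.
split.
  move=> x y; rewrite /exp_decay -/t ler_expR !mulNr lerN2 ler_pM2l //.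
  exact: (Kbd x y).1.
by move=> E /Kneg nK; apply: neg_type_expR_pos_type => //; exact: ltW.
Qed.

End DecayFromDistortion.

Definition dyadic n : RR := 2^-1 ^+ n.

Lemma dyadic_gt0 n : 0 < dyadic n.
Proof. by rewrite exprn_gt0 // invr_gt0. Qed.

Lemma dyadic_le1 n : dyadic n <= 1.
Proof. by apply: exprn_ile1; rewrite ?invr_ge0 // invf_le1 // ler1n. Qed.

Lemma sum_dyadic_le2 N : \sum_(0 <= n < N) dyadic n <= 2.
Proof.
have h0 : 0 < 2^-1 :> RR by rewrite invr_gt0.
have := @geometric_le_lim _ N 1 2^-1 ler01 h0.
rewrite /series /geometric /= ger0_norm ?invr_ge0 //.
have -> : 1 / (1 - 2^-1) = 2 :> RR by field.
by under eq_bigr do rewrite mul1r; apply; rewrite invf_lt1 // ltr1n.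
Qed.

Lemma sum_lt_indicator_le (d : RR) N : 0 <= d ->
  \sum_(0 <= n < N) (((n%:R : RR) < d)%R%:R : RR) <= d + 1.
Proof.
move=> d0; suff [] : \sum_(0 <= n < N) (((n%:R : RR) < d)%R%:R : RR) <= N%:R /\
                     \sum_(0 <= n < N) (((n%:R : RR) < d)%R%:R : RR) <= d + 1 by [].
elim: N => [|N [IH1 IH2]]; first by rewrite big_geq //; lra.
by rewrite big_nat_recr //= -addn1 natrD; case: ltP => /=; lra.
Qed.

(* Terms of index [n < d] are at most [1], the others at most [2^-n]. *)
Lemma sum_le_dyadic_tail (d : RR) (a : nat -> RR) N : 0 <= d ->
  (forall n, a n <= 1) -> (forall n, d <= n%:R -> a n < dyadic n) ->
  \sum_(0 <= n < N) a n <= d + 3.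
Proof.
move=> d0 a1 a_tail.
apply: le_trans (_ : \sum_(0 <= n < N) (((n%:R : RR) < d)%R%:R + dyadic n) <= _).
  apply: ler_sum => n _; have := a1 n; have := dyadic_gt0 n.
  case: (ltP (n%:R : RR) d) => [_ | /a_tail]; rewrite /= ?mulr1n ?mulr0n; lra.
by rewrite big_split /=; have := sum_lt_indicator_le N d0; have := sum_dyadic_le2 N; lra.
Qed.

Lemma distortion_addr (c : RR) : 0 <= c -> distortion (fun t => t + c).
Proof.
move=> c0; split; first by move=> t t0; lra.
by split=> [s t _ st | M]; [lra | exists M => t _; lra].
Qed.

Lemma decay_eventually_lt (g : nat -> RR -> RR) L eps :
  (forall n, decay (g n)) -> 0 < eps ->
  exists T, forall n t, (n < L)%N -> T <= t -> g n t < eps.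
Proof.
move=> gd eps0; elim: L => [|L [T HT]]; first by exists 0.
have [T' HT'] := (gd L).2.2.2 eps eps0.
exists (Num.max T T') => n t; rewrite ltnS leq_eqVlt ge_max => /orP[/eqP-> | nL] /andP[tT tT'].
  exact: HT'.
exact: HT.
Qed.

Section DistortionFromDecay.
Variable G : RR -> RR -> RR -> RR.
Hypothesis G_decay : decay_family G.

Definition level_decay n := G n%:R (dyadic n).

Lemma decay_level n : decay (level_decay n).
Proof. exact: G_decay (ler0n _ _) (dyadic_gt0 n) (dyadic_le1 n). Qed.

Definition sum_decay_distortion t :=
  \sum_(0 <= n < Num.truncn t) Num.max 0 (1 - level_decay n t).

Lemma sum_decay_distortion_ge0 t : 0 <= sum_decay_distortion t.
Proof. by apply: sumr_ge0 => n _; rewrite le_max lexx. Qed.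

Lemma sum_decay_distortion_le s t : 0 <= s -> s <= t ->
  sum_decay_distortion s <= sum_decay_distortion t.
Proof.
move=> s0 st; rewrite /sum_decay_distortion (big_cat_nat (leq0n _) (le_truncn st)) /=.
rewrite -[X in X <= _]addr0 lerD //; last first.
  by apply: sumr_ge0 => n _; rewrite le_max lexx.
apply: ler_sum => n _; have := (decay_level n).2.2.1 s t s0 st.
by rewrite ge_max !le_max lexx /= => gst; apply/orP; right; lra.
Qed.

(* Beyond a time [T] where the first [L] levels are below [1/2], each of
   them contributes at least [1/2]. *)
Lemma sum_decay_distortion_proper M : exists N, forall t, 0 <= t ->
  sum_decay_distortion t <= M -> t <= N.
Proof.
pose L := (Num.truncn (2 * Num.max 0 M)).+1.
have ML : 2 * M < L%:R.
  have := truncnS_gt (2 * Num.max 0 M); have : M <= Num.max 0 M by rewrite le_max lexx orbT.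
  rewrite /L; lra.
have half_gt0 : 0 < 2^-1 :> RR by rewrite invr_gt0.
have [T HT] := decay_eventually_lt L decay_level half_gt0.
exists (Num.max T L%:R) => t t0 tM; rewrite leNgt; apply/negP; rewrite gt_max => /andP[Tt Lt].
have Lt' : (L <= Num.truncn t)%N by rewrite truncn_ge_nat // ltW.
suff : L%:R / 2 <= sum_decay_distortion t by lra.
rewrite /sum_decay_distortion (big_cat_nat (leq0n _) Lt') /=.
rewrite -[X in X <= _]addr0 lerD //; last first.
  by apply: sumr_ge0 => n _; rewrite le_max lexx.
rewrite -[L in L%:R]subn0 -sumr_const_nat mulr_suml.
apply: ler_sum_nat => n /andP[_ nL]; rewrite mul1r le_max; apply/orP; right.
by have := HT n t nL (ltW Tt); lra.
Qed.

Lemma distortion_sum_decay : distortion sum_decay_distortion.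
Proof.
split; first by move=> t _; exact: sum_decay_distortion_ge0.
split; [exact: sum_decay_distortion_le | exact: sum_decay_distortion_proper].
Qed.

Lemma propk_propK (Y : metricSpace) Rb :
  propk Y G Rb -> propK Y sum_decay_distortion (fun t => t + 3) Rb.
Proof.
move=> HG; have [k Hk] := choice (fun n =>
  HG n%:R (dyadic n) (ler0n _ _) (dyadic_gt0 n) (dyadic_le1 n)).
have k_sym n x y : k n x y = k n y x := (Hk n).2.2.1 x y.
pose S x y N := \sum_(0 <= n < N) (1 - k n x y).
have S_nd x y : nondecreasing_seq (S x y).
  move=> M N MN; rewrite /S (big_cat_nat (leq0n _) MN) /= lerDl.
  by apply: sumr_ge0 => n _; rewrite subr_ge0; case: ((Hk n).1 x y).
have S_ub x y N : S x y N <= Defs.mdist x y + 3.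
  apply: sum_le_dyadic_tail (Defs.mdist_ge0 x y) _ _ => n.
    by rewrite lerBlDr lerDl; case: ((Hk n).1 x y).
  exact: (Hk n).2.2.2.1.
have S_cvg x y : cvgn (S x y).
  by apply: nondecreasing_is_cvgn => //; exists (Defs.mdist x y + 3) => _ [N _ <-].
pose K x y := limn (S x y).
have S_le_K x y N : S x y N <= K x y := nondecreasing_cvgn_le (S_nd x y) (S_cvg x y) N.
have K_sym x y : K x y = K y x.
  by rewrite /K (_ : S x y = S y x) //; apply/funext => N; apply: eq_bigr => n _; rewrite k_sym.
exists K; split; first by move=> x y; have := S_le_K x y 0; rewrite /S big_geq.
split.
  move=> x; apply/eqP; rewrite eq_le; apply/andP; split.
    apply: limr_le; first exact: S_cvg.
    by apply: nearW => N; rewrite /S big1 // => n _; rewrite (Hk n).2.1 subrr.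
  by have := S_le_K x x 0; rewrite /S big_geq.
split; first exact: K_sym.
split.
  move=> x y; split; last by apply: limr_le; [exact: S_cvg | exact: nearW].
  apply: le_trans (S_le_K x y (Num.truncn (Defs.mdist x y))); apply: ler_sum => n _.
  have := (Hk n).1 x y; have := (Hk n).2.2.2.2.1 x y.
  by rewrite /level_decay ge_max => ? ?; apply/andP; split; lra.
move=> E E_diam; apply: (neg_type_cvg_sum_one_sub k_sym) => // n.
exact: (Hk n).2.2.2.2.2 E E_diam.
Qed.

End DistortionFromDecay.

Theorem lemma3p8 :
  (forall rhom rhop : RR -> RR, distortion rhom -> distortion rhop ->
     exists G : RR -> RR -> RR -> RR, decay_family G /\
       forall (Rb : \bar RR), (0 <= Rb)%E ->
       forall Y : metricSpace, propK Y rhom rhop Rb -> propk Y G Rb) /\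
  (forall G : RR -> RR -> RR -> RR, decay_family G ->
     exists rhom rhop : RR -> RR, distortion rhom /\ distortion rhop /\
       forall (Rb : \bar RR), (0 <= Rb)%E ->
       forall Y : metricSpace, propk Y G Rb -> propK Y rhom rhop Rb).
Proof.
split=> [rhom rhop rhom_dist rhop_dist | G G_decay].
  exists (exp_decay rhom rhop); split; first exact: decay_family_exp_decay.
  by move=> Rb _ Y; apply: propK_propk.
exists (sum_decay_distortion G), (fun t => t + 3).
split; first exact: distortion_sum_decay.
split; first exact: distortion_addr.
by move=> Rb _ Y; apply: propk_propK.
Qed.
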